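(* Let $k$ be a field, $(C,\Delta)$ a coassociative coalgebra over $k$ that is skew cocommutative, i.e. $\tau\circ\Delta=-\Delta$ where $\tau(x\otimes y)=y\otimes x$, and let $(L,[\,,\,])$ be a Lie algebra over $k$. Let $\Phi(f\otimes g)(c)=\sum[f(c_{(1)}),g(c_{(2)})]$ for $f,g\in Hom(C,L)$, $\Delta(c)=\sum c_{(1)}\otimes c_{(2)}$. Then $\Phi$ is symmetric, $\Phi(g\otimes f)=\Phi(f\otimes g)$, and satisfies the Jacobi identity $\Phi(f\otimes\Phi(g\otimes h))+\Phi(g\otimes\Phi(h\otimes f))+\Phi(h\otimes\Phi(f\otimes g))=0$ for all $f,g,h\in Hom(C,L)$.
   Context: $Hom(C,L)$ denotes the vector space of $k$-linear maps $C\to L$. *)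

From HB Require Import structures.
From mathcomp Require Import all_boot all_order all_algebra.
Set Implicit Arguments. Unset Strict Implicit. Unset Printing Implicit Defensive.
Import GRing.Theory.
Local Open Scope ring_scope.

(* Elements of C (x) C (resp. C (x) C (x) C) are represented by formal finite
   sums of pure tensors, i.e. sequences of pairs (triples).  Two formal sums
   denote the same tensor iff they agree under every bilinear (trilinear)
   map into every K-vector space: this is the universal property defining
   the tensor product. *)

Section Tensors.
Variables (K : fieldType) (C : lmodType K).

Definition bilinear_map (W : lmodType K) (B : C -> C -> W) : Prop :=
  (forall (a : K) x y z, B (a *: x + y) z = a *: B x z + B y z) /\
  (forall (a : K) x y z, B z (a *: x + y) = a *: B z x + B z y).

Definition trilinear_map (W : lmodType K) (T : C -> C -> C -> W) : Prop :=
  (forall (a : K) x y u v, T (a *: x + y) u v = a *: T x u v + T y u v) /\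
  (forall (a : K) x y u v, T u (a *: x + y) v = a *: T u x v + T u y v) /\
  (forall (a : K) x y u v, T u v (a *: x + y) = a *: T u v x + T u v y).

Definition teq2 (s t : seq (C * C)) : Prop :=
  forall (W : lmodType K) (B : C -> C -> W), bilinear_map B ->
    \sum_(p <- s) B p.1 p.2 = \sum_(p <- t) B p.1 p.2.

Definition teq3 (s t : seq (C * C * C)) : Prop :=
  forall (W : lmodType K) (T : C -> C -> C -> W), trilinear_map T ->
    \sum_(p <- s) T p.1.1 p.1.2 p.2 = \sum_(p <- t) T p.1.1 p.1.2 p.2.

Definition comul_linear (Delta : C -> seq (C * C)) : Prop :=
  forall (a : K) x y,
    teq2 (Delta (a *: x + y)) ([seq (a *: p.1, p.2) | p <- Delta x] ++ Delta y).

Definition comul_left (Delta : C -> seq (C * C)) (c : C) : seq (C * C * C) :=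
  flatten [seq [seq (q.1, q.2, p.2) | q <- Delta p.1] | p <- Delta c].

Definition comul_right (Delta : C -> seq (C * C)) (c : C) : seq (C * C * C) :=
  flatten [seq [seq (p.1, q.1, q.2) | q <- Delta p.2] | p <- Delta c].

Definition coassociative (Delta : C -> seq (C * C)) : Prop :=
  forall c, teq3 (comul_left Delta c) (comul_right Delta c).

Definition skew_cocommutative (Delta : C -> seq (C * C)) : Prop :=
  forall c, teq2 [seq (p.2, p.1) | p <- Delta c] [seq (- p.1, p.2) | p <- Delta c].

End Tensors.

Section Lie.
Variables (K : fieldType) (L : lmodType K).

Definition lie_bracket (br : L -> L -> L) : Prop :=
  [/\ (forall (a : K) x y z, br (a *: x + y) z = a *: br x z + br y z),
      (forall (a : K) x y z, br z (a *: x + y) = a *: br z x + br z y),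
      (forall x, br x x = 0) &
      (forall x y z, br x (br y z) + br y (br z x) + br z (br x y) = 0)].

End Lie.

Definition Phi (K : fieldType) (C L : lmodType K) (Delta : C -> seq (C * C))
  (br : L -> L -> L) (f g : C -> L) : C -> L :=
  fun c => \sum_(p <- Delta c) br (f p.1) (g p.2).

(** Symmetry: skew cocommutativity swaps the two Sweedler factors at the
    cost of a sign, which the antisymmetry of the bracket cancels.
    Jacobi: each term of the cyclic sum is a sum of nested brackets over the
    threefold coproduct [(id (x) Delta) Delta c].  By coassociativity this sum
    may also be computed through [(Delta (x) id) Delta c], so skew
    cocommutativity lets us transpose the first two as well as the last two
    factors, each time with a sign; hence the sum is invariant under the
    cyclic permutation of the three factors.  After rotating, the three
    terms add up, triple by triple, to the Jacobi expression in [L]. *)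

From HB Require Import structures.
From mathcomp Require Import all_boot all_order all_algebra.
Import GRing.Theory.
Local Open Scope ring_scope.

Set Implicit Arguments.
Unset Strict Implicit.

Section LinearFun.
Variables (K : fieldType) (V W : lmodType K) (phi : V -> W).
Hypothesis phi_linear : linear phi.

HB.instance Definition _ := GRing.isLinear.Build K V W *:%R phi phi_linear.

Lemma linear_funD x y : phi (x + y) = phi x + phi y.
Proof. exact: linearD. Qed.

Lemma linear_funN x : phi (- x) = - phi x.
Proof. exact: linearN. Qed.

Lemma linear_fun_sum I (r : seq I) (F : I -> V) :
  phi (\sum_(i <- r) F i) = \sum_(i <- r) phi (F i).
Proof. exact: linear_sum. Qed.

End LinearFun.

Section TrilinearPermutations.
Variables (K : fieldType) (C W : lmodType K) (T : C -> C -> C -> W).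
Hypothesis T_trilinear : trilinear_map T.

Lemma trilinear_swap12 : trilinear_map (fun x y z => T y x z).
Proof.
by case: T_trilinear => T1 [T2 T3]; split; [|split] => *;
  [apply: T2 | apply: T1 | apply: T3].
Qed.

Lemma trilinear_swap23 : trilinear_map (fun x y z => T x z y).
Proof.
by case: T_trilinear => T1 [T2 T3]; split; [|split] => *;
  [apply: T1 | apply: T3 | apply: T2].
Qed.

Lemma trilinear_rot : trilinear_map (fun x y z => T y z x).
Proof.
by case: T_trilinear => T1 [T2 T3]; split; [|split] => *;
  [apply: T3 | apply: T1 | apply: T2].
Qed.

End TrilinearPermutations.

Section Sweedler.
Variables (K : fieldType) (C : lmodType K) (Delta : C -> seq (C * C)).
Hypothesis Delta_coass : coassociative Delta.
Hypothesis Delta_skew : skew_cocommutative Delta.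

Lemma skew_comul_sum (W : lmodType K) (B : C -> C -> W) c : bilinear_map B ->
  \sum_(p <- Delta c) B p.2 p.1 = - \sum_(p <- Delta c) B p.1 p.2.
Proof.
move=> B_bilinear; have := Delta_skew c B_bilinear; rewrite !big_map /= => ->.
rewrite -sumrN; apply: eq_bigr => p _.
exact: (linear_funN (phi := B^~ p.2) (fun a x y => B_bilinear.1 a x y p.2)).
Qed.

Definition sweedler3 (W : lmodType K) (T : C -> C -> C -> W) (c : C) : W :=
  \sum_(t <- comul_right Delta c) T t.1.1 t.1.2 t.2.

Section Transpositions.
Variables (W : lmodType K) (T : C -> C -> C -> W).
Hypothesis T_trilinear : trilinear_map T.

Lemma sweedler3_swap23 c :
  sweedler3 T c = - sweedler3 (fun x y z => T x z y) c.
Proof.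
case: T_trilinear => _ [T2 T3].
rewrite /sweedler3 /comul_right !big_flatten /= !big_map -sumrN.
by apply: eq_bigr => p _; rewrite !big_map /= skew_comul_sum ?opprK.
Qed.

Lemma sweedler3_swap12 c :
  sweedler3 T c = - sweedler3 (fun x y z => T y x z) c.
Proof.
rewrite /sweedler3 -(Delta_coass c T_trilinear).
rewrite -(Delta_coass c (trilinear_swap12 T_trilinear)).
case: T_trilinear => T1 [T2 _].
rewrite /comul_left !big_flatten /= !big_map -sumrN.
apply: eq_bigr => p _; rewrite !big_map /=.
by rewrite (skew_comul_sum (B := fun x y => T x y p.2)) ?opprK.
Qed.

End Transpositions.

Lemma sweedler3_rot (W : lmodType K) (T : C -> C -> C -> W) c :
  trilinear_map T -> sweedler3 T c = sweedler3 (fun x y z => T z x y) c.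
Proof.
move=> T_trilinear; rewrite sweedler3_swap12 // sweedler3_swap23 ?opprK //.
exact: trilinear_swap12.
Qed.

End Sweedler.

Section LieBracket.
Variables (K : fieldType) (L : lmodType K) (br : L -> L -> L).
Hypothesis br_lie : lie_bracket br.

Lemma lie_linearl z : linear (br^~ z).
Proof. by case: br_lie => Hl _ _ _ a x y; apply: Hl. Qed.

Lemma lie_linearr z : linear (br z).
Proof. by case: br_lie => _ Hr _ _ a x y; apply: Hr. Qed.

Lemma lie_anticomm x y : br x y = - br y x.
Proof.
case: br_lie => _ _ br_alt _; apply/eqP; rewrite -subr_eq0 opprK.
have := br_alt (x + y).
rewrite (linear_funD (lie_linearl _)) !(linear_funD (lie_linearr _)) !br_alt.
by rewrite add0r addr0 addrC => ->.
Qed.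

Lemma lie_jacobi x y z :
  br x (br y z) + br y (br z x) + br z (br x y) = 0.
Proof. by case: br_lie. Qed.

End LieBracket.

Section LieConvolution.
Variables (K : fieldType) (C L : lmodType K).
Variables (Delta : C -> seq (C * C)) (br : L -> L -> L).
Hypothesis Delta_coass : coassociative Delta.
Hypothesis Delta_skew : skew_cocommutative Delta.
Hypothesis br_lie : lie_bracket br.

Lemma bracket_comp_bilinear (u v : {linear C -> L}) :
  bilinear_map (fun x y => br (u x) (v y)).
Proof.
by split=> a x y z; rewrite linearP /=;
  [exact: lie_linearl | exact: lie_linearr].
Qed.

Lemma bracket3_comp_trilinear (u v w : {linear C -> L}) :
  trilinear_map (fun x y z => br (u x) (br (v y) (w z))).
Proof.
have [Hl Hr] := (lie_linearl br_lie, lie_linearr br_lie).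
by split; [|split] => a x y p q; rewrite linearP /= ?Hl ?Hr ?Hr.
Qed.

Lemma Phi_sym (f g : {linear C -> L}) c :
  Phi Delta br g f c = Phi Delta br f g c.
Proof.
rewrite /Phi -[RHS]opprK.
rewrite -(skew_comul_sum Delta_skew _ (bracket_comp_bilinear f g)) -sumrN.
by apply: eq_bigr => p _; rewrite lie_anticomm.
Qed.

Lemma Phi_nested (u v w : {linear C -> L}) c :
  Phi Delta br u (Phi Delta br v w) c
  = sweedler3 Delta (fun x y z => br (u x) (br (v y) (w z))) c.
Proof.
rewrite /Phi /sweedler3 /comul_right big_flatten /= big_map.
apply: eq_bigr => p _; rewrite big_map.
exact: (linear_fun_sum (lie_linearr br_lie _)).
Qed.

Lemma Phi_jacobi (f g h : {linear C -> L}) c :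
  Phi Delta br f (Phi Delta br g h) c + Phi Delta br g (Phi Delta br h f) c
  + Phi Delta br h (Phi Delta br f g) c = 0.
Proof.
rewrite !Phi_nested.
have rot := sweedler3_rot Delta_coass Delta_skew c.
rewrite [sweedler3 _ (fun x y z => br (h x) _) c]rot;
  last exact: bracket3_comp_trilinear.
have -> : sweedler3 Delta (fun x y z => br (g x) (br (h y) (f z))) c
        = sweedler3 Delta (fun x y z => br (g y) (br (h z) (f x))) c.
  by rewrite [RHS]rot //; exact: trilinear_rot (bracket3_comp_trilinear _ _ _).
rewrite /sweedler3 -!big_split big1_seq // => t _.
exact: lie_jacobi.
Qed.

End LieConvolution.

Theorem corollary2 (K : fieldType) (C L : lmodType K)
  (Delta : C -> seq (C * C)) (br : L -> L -> L)
  (HDlin : comul_linear Delta) (Hcoass : coassociative Delta)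
  (Hskew : skew_cocommutative Delta) (Hlie : lie_bracket br)
  (f g h : {linear C -> L}) :
  (forall c, Phi Delta br g f c = Phi Delta br f g c) /\
  (forall c, Phi Delta br f (Phi Delta br g h) c
             + Phi Delta br g (Phi Delta br h f) c
             + Phi Delta br h (Phi Delta br f g) c = 0).
Proof.
by split=> c; [exact: Phi_sym | exact: Phi_jacobi].
Qed.
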